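(* Let $\Gamma'\subset\Gamma$ be elliptic graphs, $\Gamma'$ a proper connected full subgraph, with index of extension $i=i_{(\Gamma',\Gamma)}$. Let $j\ge i-1$ and $\check\ell\in Supp_j(\check P_0^\Gamma)$, written $\check\ell=C^\Gamma_j+\sum_{v\in\mathcal V(\Gamma)\setminus\mathcal V(B^\Gamma_{j+1})}m_vE_v$ with $m_v\in\mathbb Z_{\ge0}$ (and $m_v:=0$ for $v\in\mathcal V(B^\Gamma_{j+1})$). Then (1) $(\check\pi_{(\Gamma',\Gamma)}(\check\ell),E_v)_{\Gamma'}=(\check\ell,E_v)_\Gamma$ for every $v\in\mathcal V(\Gamma')\setminus\partial_\Gamma(\Gamma')$; (2) $(\check\pi_{(\Gamma',\Gamma)}(\check\ell),E_v)_{\Gamma'}=(\check\ell,E_v)_\Gamma-\sum_{u\in\partial_{\Gamma'}(\Gamma)_v}m_u$ for every $v\in\partial_\Gamma(\Gamma')$.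
   Context: For a decorated tree $G$ (vertex set $\mathcal V(G)$, integer decorations $e_v$, genera zero, negative definite form $(\,,\,)_G$ on $L(G)=\mathbb Z\langle E_v\rangle$ with $(E_v,E_v)=e_v$, $(E_v,E_w)=1$ for adjacent $v\ne w$, $0$ otherwise) let $L'(G)$ be the dual lattice, $[l']$ the class in $L'(G)/L(G)$, $E_v^*$ with $(E_v^*,E_w)=-\delta_{vw}$, $\delta_v$ valency, $E^G=\sum E_v$, $Z_K^G$ with $(Z_K^G,E_v)=e_v+2$, $\chi(l')=-(l',l'-Z_K^G)/2$; $\ge$ coordinatewise, $\prec$ strict in all coordinates, $l>0$ if $l\ge0,l\ne0$, $|l'|$ the support, $x|_{G'}$ restriction of coefficients to the vertices of $G'$. $\mathcal S'(G)=\{l':(l',E_v)\le0\ \forall v\}$, $s_h=\min\{l'\in\mathcal S'(G):[l']=h\}$, $Z_{min}(B)$ the minimal nonzero element of $\mathcal S'(B)\cap L(B)$. $Z^G(\mathbf t)=\sum z^G(l')\mathbf t^{l'}$ the Taylor expansion at $0$ of $\prod_v(1-\mathbf t^{E_v^*})^{\delta_v-2}$; $Supp(P_0^G)=\{\ell\in L(G):\ell\not\prec0,\ z^G(Z^G_K-E^G-\ell)\ne0\}$. Elliptic graph: $e_v\le-2$ for all $v$, $\min_{l\in L(G),l>0}\chi(l)=0$. NN-elliptic sequence: $B^G_{-1}=G$, $Z_{B_{-1}}=s_{[Z^G_K]}$, $B^G_0=|Z^G_K-s_{[Z^G_K]}|$; for $j\ge0$, $Z_{B_j}=Z_{min}(B^G_j)$,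 and if $Z^G_K-\sum_{i=-1}^jZ_{B_i}\ne0$ then $B^G_{j+1}=|Z^G_K-\sum_{i=-1}^jZ_{B_i}|$; $m$ is the index with $Z^G_K=\sum_{i=-1}^mZ_{B_i}$; $C^G_j=\sum_{i=-1}^jZ_{B_i}$. For $\ell\in Supp(P_0^G)$ with $\mathcal V^{<0}(\ell)=\{v:\ell_v<0\}$, the associated cycle is the unique $l'$ with $\ell=Z^G_K-E^G-l'-\sum_{v\in\mathcal V^{<0}(\ell)}m_vE_v$, $l'\le Z^G_K$, $l'_v=(Z^G_K)_v$ on $\mathcal V^{<0}(\ell)$, $m_v\in\mathbb Z_{\ge0}$; $Supp_j(\check P_0^G)=\{Z^G_K-E^G-\ell:\ell\in Supp(P_0^G)$ with associated cycle $C^G_j\}$. $\partial_\Gamma(\Gamma')$ is the set of vertices of $\Gamma'$ adjacent to a vertex of $\Gamma\setminus\Gamma'$; for $v\in\partial_\Gamma(\Gamma')$, $\partial_{\Gamma'}(\Gamma)_v$ is the set of neighbours of $v$ in $\Gamma\setminus\Gamma'$. $\check\pi_{(\Gamma',\Gamma)}(x)=Z_K^{\Gamma'}-E^{\Gamma'}-(Z_K^\Gamma-E^\Gamma-x)|_{\Gamma'}$. It is known that there is a unique integer $i_{(\Gamma',\Gamma)}\ge0$ (index of the extension) with $B^\Gamma_i\subseteq\Gamma'\subsetneq B^\Gamma_{i-1}$. *)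

(* Decorated trees on the vertex type 'I_n; full subgraphs are
   vertex subsets S : {set 'I_n}; cycles (elements of L(S) (x) Q, in particular of
   L'(S)) are rational coordinate vectors w.r.t. the basis (E_v)_v, supported on S. *)
From mathcomp Require Import all_boot all_order all_algebra.
Set Implicit Arguments. Unset Strict Implicit. Unset Printing Implicit Defensive.
Import Order.TTheory GRing.Theory Num.Theory.
Local Open Scope ring_scope.

Section Graph.
Variables (n : nat) (adj : rel 'I_n) (e : 'I_n -> int).

Definition cyc := {ffun 'I_n -> rat}.

Definition Imat (v w : 'I_n) : rat :=
  if v == w then (e v)%:~R else if adj v w then 1 else 0.

Definition iform (S : {set 'I_n}) (x y : cyc) : rat :=
  \sum_(v in S) \sum_(w in S) x v * y w * Imat v w.

Definition Ebase (v : 'I_n) : cyc := [ffun w => (w == v)%:R].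
Definition Eset (S : {set 'I_n}) : cyc := [ffun w => (w \in S)%:R].

Definition supported (S : {set 'I_n}) (x : cyc) := forall v, v \notin S -> x v = 0.
Definition integral (x : cyc) := forall v, x v \is a Num.int.
Definition inL (S : {set 'I_n}) (x : cyc) := supported S x /\ integral x.
Definition inL' (S : {set 'I_n}) (x : cyc) :=
  supported S x /\ forall v, v \in S -> iform S x (Ebase v) \is a Num.int.

(* The unique x supported on S with (x, E_v)_S = f v for all v in S
   (S-block of the intersection matrix, padded by -1 on the diagonal outside S;
   invertible since the form is negative definite). *)
Definition padM (S : {set 'I_n}) : 'M[rat]_n :=
  \matrix_(v, w) (if (v \in S) && (w \in S) then Imat v w else - (v == w)%:R).
Definition solve (S : {set 'I_n}) (f : 'I_n -> rat) : cyc :=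
  [ffun w => ((\row_v (if v \in S then f v else 0)) *m invmx (padM S)) ord0 w].

Definition ZK (S : {set 'I_n}) : cyc := solve S (fun v => (e v)%:~R + 2).
Definition Estar (S : {set 'I_n}) (v : 'I_n) : cyc := solve S (fun w => - (w == v)%:R).
Definition chi (S : {set 'I_n}) (x : cyc) : rat := - iform S x (x - ZK S) / 2.

Definition cle (x y : cyc) := forall v, x v <= y v.
Definition cprec (S : {set 'I_n}) (x y : cyc) := forall v, v \in S -> x v < y v.
Definition cpos (x : cyc) := cle 0 x /\ x <> 0.
Definition supp (x : cyc) : {set 'I_n} := [set v | x v != 0].
Definition restr (S : {set 'I_n}) (x : cyc) : cyc := [ffun v => if v \in S then x v else 0].
Definition valency (S : {set 'I_n}) (v : 'I_n) : nat := #|[set w in S | adj v w]|.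

Definition Sprime (S : {set 'I_n}) (x : cyc) :=
  inL' S x /\ forall v, v \in S -> iform S x (Ebase v) <= 0.
Definition is_min (P : cyc -> Prop) (x : cyc) := P x /\ forall y, P y -> cle x y.
Definition is_s_ZK (S : {set 'I_n}) (x : cyc) := is_min (fun y => Sprime S y /\ integral (y - ZK S)) x.
Definition is_Zmin (B : {set 'I_n}) (x : cyc) := is_min (fun y => Sprime B y /\ integral y /\ y <> 0) x.

(* coefficient of x^m in the Taylor expansion of (1 - x)^k, k : int *)
Definition taylor (k : int) (m : nat) : int :=
  if (0 <= k)%R then (-1) ^+ m * ('C(`|k|%N, m))%:Z else ('C((m + `|k|).-1, m))%:Z.

(* z^S(x): coefficient of t^x in prod_{v in S} (1 - t^{E_v^*})^{delta_v - 2};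
   it is the sum over the tuples (k_v) with sum_v k_v E_v^* = x.  Every such tuple
   satisfies k_v = -(x, E_v)_S, so the sum over k_v < N below is exhaustive. *)
Definition zcoef (S : {set 'I_n}) (x : cyc) : int :=
  let N := (\sum_(v in S) `|numq (iform S x (Ebase v))|%N).+1 in
  \sum_(k : {ffun 'I_n -> 'I_N} |
          [forall v, (v \notin S) ==> (val (k v) == 0%N)] &&
          ([ffun w => \sum_(v in S) (val (k v))%:R * Estar S v w] == x))
    \prod_(v in S) taylor ((valency S v)%:Z - 2) (val (k v)).

Definition inSuppP0 (S : {set 'I_n}) (l : cyc) :=
  inL S l /\ ~ cprec S l 0 /\ zcoef S (ZK S - Eset S - l) != 0.

Definition assoc (S : {set 'I_n}) (l l' : cyc) :=
  exists m : 'I_n -> nat,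
    l = ZK S - Eset S - l' - [ffun v => if l v < 0 then (m v)%:R else 0]
    /\ cle l' (ZK S) /\ (forall v, l v < 0 -> l' v = ZK S v).

Definition inSuppj (S : {set 'I_n}) (C lc : cyc) :=
  exists l, inSuppP0 S l /\ assoc S l C /\ lc = ZK S - Eset S - l.

(* Partial sums: Csum Z k = sum_{i <= k} Z i.  With the index shift
   B k = B_{k-1}, Z k = Z_{B_{k-1}}, Csum Z k = C_{k-1}, M = m + 1. *)
Definition Csum (Z : nat -> cyc) (k : nat) : cyc := \sum_(i < k.+1) Z i.

Definition NNseq (S : {set 'I_n}) (B : nat -> {set 'I_n}) (Z : nat -> cyc) (M : nat) :=
  [/\ B 0%N = S /\ is_s_ZK S (Z 0%N),
      (forall k, (1 <= k <= M)%N -> is_Zmin (B k) (Z k)),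
      (forall k, (k < M)%N -> Csum Z k <> ZK S),
      Csum Z M = ZK S &
      (forall k, (k <= M)%N -> B k.+1 = supp (ZK S - Csum Z k))].

Definition picheck (S' : {set 'I_n}) (x : cyc) : cyc :=
  ZK S' - Eset S' - restr S' (ZK setT - Eset setT - x).

Definition boundary (S' : {set 'I_n}) : {set 'I_n} :=
  [set v in S' | [exists u, (u \notin S') && adj v u]].
Definition nbr_out (S' : {set 'I_n}) (v : 'I_n) : {set 'I_n} :=
  [set u | (u \notin S') && adj v u].

Definition connected_sub (S : {set 'I_n}) :=
  forall u v, u \in S -> v \in S ->
    connect [rel x y | [&& adj x y, x \in S & y \in S]] u v.

Definition negdef (S : {set 'I_n}) :=
  forall x : cyc, supported S x -> x <> 0 -> iform S x x < 0.

(* decorated tree (genera zero) with negative definite intersection form *)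
Definition decorated_tree :=
  [/\ (0 < n)%N /\ symmetric adj, irreflexive adj, connected_sub setT,
      #|[set p : 'I_n * 'I_n | adj p.1 p.2]| = (2 * n.-1)%N & negdef setT].

Definition elliptic (S : {set 'I_n}) :=
  [/\ forall v, v \in S -> e v <= -2,
      forall l, inL S l -> cpos l -> 0 <= chi S l &
      exists2 l, inL S l /\ cpos l & chi S l = 0].

End Graph.

(* Since Z_K^Γ' and Z_K^Γ both pair to e_v + 2 with E_v, for v ∈ Γ' the
   Γ'-form of π̌(x) against E_v differs from the Γ-form of x only by the
   contributions (Z_K^Γ - x)_u of the neighbours u ∉ Γ' of v.  For
   x = ℓ̌ = C_j + Σ m_u E_u, the cycle Z_K^Γ - C_j is supported on B_{j+1}, which
   lies in Γ' since the NN-elliptic sequence is decreasing; hence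
   (Z_K^Γ - ℓ̌)_u = -m_u outside Γ'. *)
From Pilot Require Import Defs.
From mathcomp Require Import all_boot all_order all_algebra ring.
Set Implicit Arguments. Unset Strict Implicit. Unset Printing Implicit Defensive.
Import Order.TTheory GRing.Theory Num.Theory.
Local Open Scope ring_scope.

Section IntersectionForm.
Variables (n : nat) (adj : rel 'I_n) (e : 'I_n -> int).
Local Notation I := (Imat adj e).
Local Notation iform := (iform adj e).
Local Notation ZK := (ZK adj e).

Lemma iform_Ebase (S : {set 'I_n}) (x : cyc n) v :
  v \in S -> iform S x (Ebase v) = \sum_(w in S) x w * I w v.
Proof.
move=> vS; apply: eq_bigr => w _.
rewrite (bigD1 v) //= big1 => [|u /andP[_ uv]]; last by rewrite !ffunE (negbTE uv) mulr0 mul0r.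
by rewrite !ffunE eqxx mulr1 addr0.
Qed.

Lemma iform_sum_Ebase (S : {set 'I_n}) (x y : cyc n) :
  iform S x y = \sum_(w in S) y w * iform S x (Ebase w).
Proof.
rewrite {1}/Defs.iform exchange_big; apply: eq_bigr => w wS.
rewrite iform_Ebase // mulr_sumr; apply: eq_bigr => v _.
by rewrite mulrCA mulrA.
Qed.

Lemma iform_setT_supported (S : {set 'I_n}) (x y : cyc n) :
  supported S x -> supported S y -> iform setT x y = iform S x y.
Proof.
move=> xS yS; rewrite !iform_sum_Ebase (big_setID S) setTI setTD /=.
rewrite [X in _ + X]big1 ?addr0 => [|w /[!inE]/yS ->]; last by rewrite mul0r.
apply: eq_bigr => w wS; rewrite !iform_Ebase ?in_setT // (big_setID S) setTI setTD /=.
by rewrite [X in _ + X]big1 ?addr0 // => u /[!inE]/xS ->; rewrite mul0r.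
Qed.

Lemma mulmx_padM (S : {set 'I_n}) (u : 'rV[rat]_n) w :
  (u *m padM adj e S) ord0 w =
    if w \in S then \sum_(z in S) u ord0 z * I z w else - u ord0 w.
Proof.
have offdiag z : z \in S != (w \in S) -> u ord0 z * - (z == w)%:R = 0.
  move=> zSw; rewrite (_ : z == w = false) ?oppr0 ?mulr0 //.
  by apply: contraNF zSw => /eqP ->.
rewrite mxE (bigID (mem S)) /=; case: ifP => wS.
  rewrite [X in _ + X]big1 ?addr0 => [|z zS]; last first.
    by rewrite mxE (negbTE zS) offdiag ?(negbTE zS) ?wS.
  by apply: eq_bigr => z zS; rewrite mxE zS wS.
rewrite big1 ?add0r => [|z zS]; last by rewrite mxE wS andbF offdiag ?zS ?wS.
rewrite (bigD1 w) ?wS //= mxE wS eqxx mulrN1 big1 ?addr0 // => z /andP[_ zw].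
by rewrite mxE wS andbF (negbTE zw) oppr0 mulr0.
Qed.

Hypothesis negdefT : negdef adj e setT.

Lemma padM_unit (S : {set 'I_n}) : padM adj e S \in unitmx.
Proof.
rewrite unitmxE unitfE; apply/negP => /det0P [u u_neq0 uM0].
pose x : cyc n := [ffun w => u ord0 w].
have uM0w w : (u *m padM adj e S) ord0 w = 0 by rewrite uM0 mxE.
have xS : supported S x.
  move=> w wS; have := uM0w w; rewrite mulmx_padM (negbTE wS) ffunE.
  by move=> /eqP; rewrite oppr_eq0 => /eqP.
have x_neq0 : x <> 0.
  move=> x0; apply/(negP u_neq0)/eqP/rowP => w.
  by have := congr1 (fun f : cyc n => f w) x0; rewrite !ffunE mxE.
have xT : supported setT x by move=> w; rewrite in_setT.
have := negdefT xT x_neq0.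
rewrite (iform_setT_supported xS xS) iform_sum_Ebase big1 ?ltxx // => w wS.
have := uM0w w; rewrite mulmx_padM wS => sum0.
rewrite iform_Ebase // (eq_bigr (fun z => u ord0 z * I z w)) ?sum0 ?mulr0 // => z _.
by rewrite ffunE.
Qed.

Lemma iform_solve (S : {set 'I_n}) f v :
  v \in S -> iform S (solve adj e S f) (Ebase v) = f v.
Proof.
move=> vS; rewrite iform_Ebase // /solve; set r := (X in X *m _).
have := mulmx_padM S (r *m invmx (padM adj e S)) v.
rewrite mulmxKV ?padM_unit // vS mxE vS => ->.
by apply: eq_bigr => w _; rewrite ffunE.
Qed.

Hypothesis adj_sym : symmetric adj.

Lemma iform_picheck (S : {set 'I_n}) (x : cyc n) v : v \in S ->
  iform S (picheck adj e S x) (Ebase v) =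
    iform setT x (Ebase v) + \sum_(u in nbr_out adj S v) (ZK setT - x) u.
Proof.
move=> vS; set y := ZK setT - x.
have ZK_Ebase : iform S (ZK S) (Ebase v) = iform setT (ZK setT) (Ebase v).
  by rewrite !iform_solve ?in_setT.
have -> : iform setT x (Ebase v) = iform setT (ZK setT) (Ebase v) - iform setT y (Ebase v).
  rewrite !iform_Ebase ?in_setT // -sumrB; apply: eq_bigr => w _.
  by rewrite /y !ffunE; ring.
have y_out : \sum_(w in ~: S) y w * I w v = \sum_(u in nbr_out adj S v) y u.
  rewrite big_mkcond [RHS]big_mkcond; apply: eq_bigr => w _; rewrite !inE.
  case: (boolP (w \in S)) => wS //=.
  have wv : (w == v) = false by apply: contraNF wS => /eqP ->.
  by rewrite /Imat wv adj_sym; case: (adj v w); rewrite ?mulr1 ?mulr0.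
rewrite !iform_Ebase ?in_setT // in ZK_Ebase *.
rewrite [X in _ = _ - X + _](big_setID S) setTI setTD /= -y_out -ZK_Ebase.
have -> : \sum_(w in S) picheck adj e S x w * I w v =
    \sum_(w in S) ZK S w * I w v - \sum_(w in S) y w * I w v.
  rewrite -sumrB; apply: eq_bigr => w wS.
  by rewrite /picheck /restr /y !ffunE wS in_setT; ring.
ring.
Qed.

End IntersectionForm.

Section NNellipticSequence.
Variables (n : nat) (adj : rel 'I_n) (e : 'I_n -> int).
Variables (B : nat -> {set 'I_n}) (Z : nat -> cyc n) (M : nat).
Hypothesis NN : NNseq adj e setT B Z M.
Local Notation ZK := (ZK adj e setT).

Lemma NNseq_ZK_sub_Csum_out k w :
  (k <= M)%N -> w \notin B k.+1 -> (ZK - Csum Z k) w = 0.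
Proof. by case: NN => _ _ _ _ Bsupp /Bsupp ->; rewrite inE negbK => /eqP. Qed.

Lemma NNseq_subset_succ k : (k < M)%N -> B k.+2 \subset B k.+1.
Proof.
move=> ltkM; have [_ Zmin _ _ Bsupp] := NN.
have [[[[Z_supp _] _] _] _] := Zmin k.+1 ltkM.
rewrite (Bsupp _ ltkM); apply/subsetP => w; apply: contraTT => wB.
rewrite inE negbK /Csum big_ord_recr -/(Csum Z k) /=.
have -> : (ZK - (Csum Z k + Z k.+1)) w = (ZK - Csum Z k) w - Z k.+1 w.
  by rewrite !ffunE opprD addrA.
by rewrite NNseq_ZK_sub_Csum_out 1?ltnW // Z_supp // subrr.
Qed.

Lemma NNseq_subset i j : (i <= j <= M)%N -> B j.+1 \subset B i.+1.
Proof.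
move=> /andP[leij lejM].
apply: (@homo_leq_in _ [pred k | k <= M]%N (fun k => B k.+1) (fun X Y => Y \subset X)) => //=.
- by move=> X Y W XY YW; apply: subset_trans XY.
- by move=> a b _ bM c /andP[_ /ltnW/leq_trans]; apply.
- by move=> k _; apply: NNseq_subset_succ.
- exact: leq_trans lejM.
Qed.

End NNellipticSequence.

Theorem mainTheorem12 (n : nat) (adj : rel 'I_n) (e : 'I_n -> int)
    (S' : {set 'I_n}) (B : nat -> {set 'I_n}) (Z : nat -> cyc n) (M i j : nat)
    (lc : cyc n) (m : 'I_n -> nat) :
  decorated_tree adj e ->
  elliptic adj e setT -> elliptic adj e S' ->
  S' \proper setT -> connected_sub adj S' ->
  NNseq adj e setT B Z M ->
  (i <= M)%N -> B i.+1 \subset S' -> S' \proper B i ->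
  (i <= j <= M)%N ->
  inSuppj adj e setT (Csum Z j) lc ->
  (forall v, v \in B j.+1 -> m v = 0%N) ->
  lc = Csum Z j + [ffun v => (m v)%:R] ->
  (forall v, v \in S' :\: boundary adj S' ->
     iform adj e S' (picheck adj e S' lc) (Ebase v) = iform adj e setT lc (Ebase v)) /\
  (forall v, v \in boundary adj S' ->
     iform adj e S' (picheck adj e S' lc) (Ebase v)
       = iform adj e setT lc (Ebase v) - \sum_(u in nbr_out adj S' v) (m u)%:R).
Proof.
move=> [[_ adj_sym] _ _ _ negdefT] _ _ _ _ NN _ BiS _ lejM _ _ lcE.
have BjS : B j.+1 \subset S' := subset_trans (NNseq_subset NN lejM) BiS.
have {lejM} /andP[_ lejM] := lejM.
have out_m u : u \notin S' -> (ZK adj e setT - lc) u = - (m u)%:R.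
  move=> uS; have uB : u \notin B j.+1 by apply: contra uS; apply: (subsetP BjS).
  have -> : (ZK adj e setT - lc) u = (ZK adj e setT - Csum Z j) u - (m u)%:R.
    by rewrite lcE !ffunE opprD addrA.
  by rewrite (NNseq_ZK_sub_Csum_out NN lejM uB) sub0r.
have pi_lc_Ebase v : v \in S' -> iform adj e S' (picheck adj e S' lc) (Ebase v) =
    iform adj e setT lc (Ebase v) - \sum_(u in nbr_out adj S' v) (m u)%:R.
  move=> vS; rewrite iform_picheck // -sumrN; congr (_ + _).
  by apply: eq_bigr => u; rewrite inE => /andP[/out_m].
split => v; last by rewrite inE => /andP[/pi_lc_Ebase].
rewrite !inE => /andP[not_bd vS]; rewrite pi_lc_Ebase // big1 ?subr0 // => u.
rewrite inE => /andP[uS adj_vu]; case/negP: not_bd.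
by rewrite vS; apply/existsP; exists u; rewrite uS.
Qed.
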